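(* Let $W$ be an $\epsilon$-spectral cluster of $G_0$, let $V\subseteq V_0$ be closed in $G_0$ and dominate $W$, let $G=G_0|V$, and let $S\subseteq V$ be closed in $G$ with $\mathrm{vol}_{G_0}(W\setminus S)\le\frac23\mathrm{vol}_{G_0}(W)$. Perform the following ''big expansion'' of $S$ inside $G$: (1) a grab; (2) local improvements of $S$; (3) a grab; (4) local improvements of $S$. Here a grab replaces $S$ by $S\cup T$, where $T$ is the set of all $v\in V\setminus S$ with $d_G(v)>0$ having at least $\frac16 d_G(v)$ of their $G$-neighbors in $S$ (computed before the grab); local improvements of $S$ means: while there exists $v\in V\setminus S$ with $d_G(v)>0$ and at least $\frac59 d_G(v)$ of its $G$-neighbors in $S$, add $v$ to $S$. Then the resulting set $S$ dominates $W$.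
   Context: Standing setting: $G_0=(V_0,E_0)$ is a finite simple undirected graph and $0<\epsilon\le 1/2000000$. For a graph $H$, $d_H(v)$ is the degree, $\mathrm{vol}_H(S)=\sum_{v\in S}d_H(v)$, $E(S,T)$ is the set of edges with one endpoint in $S$ and the other in $T$, $\partial_H S=E(S,V(H)\setminus S)$. For $V\subseteq V_0$, $G_0|V$ is the induced subgraph. An $\epsilon$-spectral cluster of $G_0$ is $W\subseteq V_0$ with $\mathrm{vol}_{G_0}(W)>0$, $|\partial_{G_0}W|\le\epsilon\,\mathrm{vol}_{G_0}(W)$, and for every $A\subseteq W$ with $r=\mathrm{vol}_{G_0}(A)/\mathrm{vol}_{G_0}(W)$, $|E(A,W\setminus A)|\ge(r(1-r)-\epsilon)\mathrm{vol}_{G_0}(W)$. A set $A\subseteq V(H)$ is closed in $H$ if no $v\in V(H)\setminus A$ with $d_H(v)>0$ has at least $\frac59 d_H(v)$ of its $H$-neighbors in $A$. A set $A\subseteq V_0$ dominates $W$ if $\mathrm{vol}_{G_0}(W\cap A)>(1-3\epsilon)\mathrm{vol}_{G_0}(W)$. *)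

(* A finite simple graph G0 = (V0,E0) is a finType T (= V0)
   with a symmetric irreflexive relation e : rel T. *)
From HB Require Import structures.
From mathcomp Require Import all_boot all_order all_algebra.
Set Implicit Arguments. Unset Strict Implicit. Unset Printing Implicit Defensive.
Import Order.TTheory GRing.Theory Num.Theory.

Section Graph.
Variables (T : finType) (e : rel T).

(* degree of v in the induced subgraph G0|V *)
Definition deg (V : {set T}) (v : T) : nat := #|[set u in V | e v u]|.

Definition nbrs_in (V A : {set T}) (v : T) : nat :=
  #|[set u in V | e v u && (u \in A)]|.

Definition vol (A : {set T}) : nat := \sum_(v in A) deg setT v.

Definition edges_between (S T' : {set T}) : {set {set T}} :=
  [set [set p.1; p.2] | p in [set p : T * T | [&& e p.1 p.2, p.1 \in S & p.2 \in T']]].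

Definition closed_in (V A : {set T}) : Prop :=
  forall v, v \in V -> v \notin A -> 0 < deg V v ->
    ~ (5 * deg V v <= 9 * nbrs_in V A v).

Definition grab (V S : {set T}) : {set T} :=
  S :|: [set v in V | [&& v \notin S, 0 < deg V v & deg V v <= 6 * nbrs_in V S v]].

(* local_improvements V S S' : S' is a possible outcome of the process
   "while there is v in V \ S with d_G(v) > 0 and >= 5/9 d_G(v) neighbours in S,
    add v to S" run inside G = G0|V starting from S. *)
Inductive local_improvements (V : {set T}) : {set T} -> {set T} -> Prop :=
  | li_stop (S : {set T}) : closed_in V S -> local_improvements V S S
  | li_step (S S' : {set T}) (v : T) : v \in V -> v \notin S -> 0 < deg V v ->
      5 * deg V v <= 9 * nbrs_in V S v ->
      local_improvements V (v |: S) S' -> local_improvements V S S'.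

Section Real.
Local Open Scope ring_scope.
Variables (R : realFieldType) (eps : R).

Definition spectral_cluster (W : {set T}) : Prop :=
  (0 < vol W)%N /\
  (#|edges_between W (~: W)|%:R <= eps * (vol W)%:R) /\
  (forall A : {set T}, A \subset W ->
     let r := (vol A)%:R / (vol W)%:R in
     (r * (1 - r) - eps) * (vol W)%:R <= #|edges_between A (W :\: A)|%:R).

Definition dominates (A W : {set T}) : Prop :=
  (1 - 3 * eps) * (vol W)%:R < (vol (W :&: A))%:R.
End Real.
End Graph.

From HB Require Import structures.
From mathcomp Require Import all_boot all_order all_algebra.
From mathcomp Require Import ring lra zify.
Import Order.TTheory GRing.Theory Num.Theory.
Set Implicit Arguments. Unset Strict Implicit.

(* Let X = W \ S and let Y be the part of X not taken by the first grab.  Every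
   edge from X to W \ X ends in S.  A vertex of X outside Y, or outside V, sends
   at most 5/9 of its edges into S because S and V are closed; a vertex of Y
   inside V sends at most 1/6 of them because it was not grabbed.  Against the
   spectral lower bound on |E(X, W \ X)|, with vol X <= 2/3 vol W and
   vol (W \ V) < 3 eps vol W, this gives vol Y <= 2/5 vol W.  The final set
   contains the first grab and is closed, so F = W \ S4 lies in Y and at most
   5/9 of the volume of F crosses to W \ F; the spectral bound then rules out
   3 eps vol W <= vol F <= 2/5 vol W. *)

Section Graph.
Variables (T : finType) (e : rel T).

Lemma vol_setID (A C : {set T}) : vol e A = vol e (A :&: C) + vol e (A :\: C).
Proof. by rewrite /vol (big_setID C). Qed.

Lemma vol_subset (A B : {set T}) : A \subset B -> vol e A <= vol e B.
Proof. by move=> sAB; rewrite (vol_setID B A) (setIidPr sAB) leq_addr. Qed.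

Lemma deg_le_degT (V : {set T}) v : deg e V v <= deg e setT v.
Proof. by apply: subset_leq_card; apply/subsetP => u; rewrite !inE => /andP[]. Qed.

Lemma nbrs_in_le_deg (V C : {set T}) v : nbrs_in e V C v <= deg e V v.
Proof.
by apply: subset_leq_card; apply/subsetP => u; rewrite !inE => /andP[-> /andP[->]].
Qed.

Lemma nbrs_inS (V B C : {set T}) v :
  B \subset C -> nbrs_in e V B v <= nbrs_in e V C v.
Proof.
move=> sBC; apply: subset_leq_card; apply/subsetP => u; rewrite !inE.
by case/and3P => -> -> /(subsetP sBC) ->.
Qed.

Lemma nbrs_in_setT (V C : {set T}) v :
  C \subset V -> nbrs_in e V C v = nbrs_in e setT C v.
Proof.
move=> sCV; apply: eq_card => u; rewrite !inE.
by case uC: (u \in C); rewrite ?(subsetP sCV _ uC) ?andbT ?andbF.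
Qed.

Lemma card_edges_between_le (A B : {set T}) :
  #|edges_between e A B| <= \sum_(v in A) nbrs_in e setT B v.
Proof.
rewrite /edges_between; apply: leq_trans (leq_imset_card _ _) _.
rewrite -sum1_card /nbrs_in.
under [X in _ <= X]eq_bigr => v _ do rewrite -sum1_card.
rewrite pair_big_dep /=; apply: eq_leq; apply: eq_bigl => -[a b] /=.
by rewrite !inE; case: (a \in A); case: (e a b); case: (b \in B).
Qed.

Lemma card_edges_setD_le (W C : {set T}) :
  #|edges_between e (W :\: C) (W :\: (W :\: C))|
    <= \sum_(v in W :\: C) nbrs_in e setT C v.
Proof.
apply: leq_trans (card_edges_between_le _ _) _; apply: leq_sum => v _.
apply: nbrs_inS; apply/subsetP => u; rewrite !inE.
by case: (u \in C); case: (u \in W).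
Qed.

Lemma leq_sum_nbrs_vol (a b : nat) (A C : {set T}) :
  (forall v, v \in A -> a * nbrs_in e setT C v <= b * deg e setT v) ->
  a * \sum_(v in A) nbrs_in e setT C v <= b * vol e A.
Proof. by move=> hA; rewrite /vol !big_distrr leq_sum. Qed.

Lemma nbrs_in_deg0 (V C : {set T}) v : deg e V v = 0 -> nbrs_in e V C v = 0.
Proof. by move=> d0; apply/eqP; rewrite -leqn0 -d0 nbrs_in_le_deg. Qed.

Lemma closed_in_nbrs (V C : {set T}) v :
  closed_in e V C -> v \in V -> v \notin C ->
  9 * nbrs_in e V C v <= 5 * deg e V v.
Proof.
move=> hC vV vC; case: (posnP (deg e V v)) => [/(nbrs_in_deg0 C) -> // |].
by move/(hC v vV vC)/negP; rewrite -ltnNge => /ltnW.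
Qed.

Lemma closed_in_nbrsT (V C : {set T}) v :
  closed_in e setT V -> closed_in e V C -> C \subset V -> v \notin C ->
  9 * nbrs_in e setT C v <= 5 * deg e setT v.
Proof.
move=> hV hC sCV vC; case vV: (v \in V).
  rewrite -(nbrs_in_setT _ sCV); apply: leq_trans (closed_in_nbrs hC vV vC) _.
  by rewrite leq_mul2l deg_le_degT.
apply: leq_trans (closed_in_nbrs hV (in_setT v) (negbT vV)).
by rewrite leq_mul2l nbrs_inS ?subsetT.
Qed.

Lemma subset_grab (V S : {set T}) : S \subset grab e V S.
Proof. exact: subsetUl. Qed.

Lemma grab_subset (V S : {set T}) : S \subset V -> grab e V S \subset V.
Proof.
by move=> sSV; rewrite subUset sSV; apply/subsetP => u; rewrite inE => /andP[].
Qed.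

Lemma notin_grab_nbrs (V S : {set T}) v :
  S \subset V -> v \in V -> v \notin grab e V S ->
  6 * nbrs_in e setT S v <= deg e setT v.
Proof.
move=> sSV vV; rewrite !inE negb_or vV /= => /andP[vS]; rewrite vS /=.
rewrite -(nbrs_in_setT _ sSV).
case: (posnP (deg e V v)) => [/(nbrs_in_deg0 S) -> // | _ /=].
by rewrite -ltnNge => /ltnW/leq_trans; apply; apply: deg_le_degT.
Qed.

Lemma grab_cut_bound (W V S : {set T}) :
  closed_in e setT V -> closed_in e V S -> S \subset V ->
  18 * #|edges_between e (W :\: S) (W :\: (W :\: S))|
    <= 10 * vol e ((W :\: S) :&: grab e V S) + 3 * vol e ((W :\: S) :\: grab e V S)
       + 7 * vol e (W :\: V).
Proof.
move=> hV hS sSV; set X := W :\: S; set Y := X :\: grab e V S.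
have nbrsX v : v \in X -> 18 * nbrs_in e setT S v <= 10 * deg e setT v.
  case/setDP => _ vS; have := closed_in_nbrsT hV hS sSV vS.
  by rewrite -(leq_pmul2l (isT : 0 < 2)) !mulnA.
have nbrsYV v : v \in Y :&: V -> 18 * nbrs_in e setT S v <= 3 * deg e setT v.
  case/setIP => /setDP[_ vG] vV; have := notin_grab_nbrs sSV vV vG.
  by rewrite -(leq_pmul2l (isT : 0 < 3)) !mulnA.
have sum_XG : 18 * \sum_(v in X :&: grab e V S) nbrs_in e setT S v
    <= 10 * vol e (X :&: grab e V S).
  by apply: leq_sum_nbrs_vol => v /setIP[/nbrsX].
have sum_YV := leq_sum_nbrs_vol nbrsYV.
have sum_YnV : 18 * \sum_(v in Y :\: V) nbrs_in e setT S v <= 10 * vol e (Y :\: V).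
  by apply: leq_sum_nbrs_vol => v /setDP[/setDP[/nbrsX]].
have vol_YnV : vol e (Y :\: V) <= vol e (W :\: V).
  by apply/vol_subset/setSD/(subset_trans (subsetDl _ _)); apply: subsetDl.
have card_E := leq_mul (leqnn 18) (card_edges_setD_le W S).
have vol_Y := vol_setID Y V.
rewrite (big_setID (grab e V S)) /= -/X -/Y (big_setID V (A := Y)) /= in card_E.
apply: leq_trans card_E _; rewrite !mulnDr.
apply: leq_trans (leq_add sum_XG (leq_add sum_YV sum_YnV)) _.
lia.
Qed.

Lemma closed_cut_bound (W V C : {set T}) :
  closed_in e setT V -> closed_in e V C -> C \subset V ->
  9 * #|edges_between e (W :\: C) (W :\: (W :\: C))| <= 5 * vol e (W :\: C).
Proof.
move=> hV hC sCV; apply: leq_trans (leq_mul (leqnn 9) (card_edges_setD_le W C)) _.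
by apply: leq_sum_nbrs_vol => v /setDP[_ vC]; apply: closed_in_nbrsT hV hC sCV vC.
Qed.

Section LocalImprovements.
Variables (V A B : {set T}).
Hypothesis hAB : local_improvements e V A B.

Lemma local_improvements_subset : A \subset B.
Proof.
elim: hAB => // S S' v _ _ _ _ _; apply: subset_trans; exact: subsetUr.
Qed.

Lemma local_improvements_closed : closed_in e V B.
Proof. by elim: hAB. Qed.

Lemma local_improvements_subsetV : A \subset V -> B \subset V.
Proof.
elim: hAB => // S S' v vV _ _ _ _ IH sSV.
by apply: IH; rewrite subUset sub1set vV.
Qed.
End LocalImprovements.

End Graph.

Section Spectral.
Local Open Scope ring_scope.
Variables (R : realFieldType) (eps : R) (T : finType) (e : rel T).

Lemma dominatesE (A W : {set T}) :
  dominates e eps A W <-> (vol e (W :\: A))%:R < 3 * eps * (vol e W)%:R.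
Proof. by rewrite /dominates (vol_setID e W A) natrD; split=> ?; lra. Qed.

Lemma spectral_cluster_cut (W A : {set T}) :
  spectral_cluster e eps W -> A \subset W ->
  (vol e A)%:R * (vol e W)%:R - (vol e A)%:R ^+ 2 - eps * (vol e W)%:R ^+ 2
    <= #|edges_between e A (W :\: A)|%:R * (vol e W)%:R.
Proof.
case=> w_gt0 [_ cut] sAW; have := cut A sAW.
have w_pos : 0 < (vol e W)%:R :> R by rewrite ltr0n.
rewrite /= -(ler_pM2r w_pos) => cutA; apply: le_trans cutA.
by rewrite le_eqVlt; apply/orP; left; apply/eqP; field; rewrite gt_eqF.
Qed.

Hypotheses (eps_gt0 : 0 < eps) (eps_small : eps <= 1 / 2000000%:R).

Lemma ungrabbed_le_two_fifths (w z y u E : R) : 0 < w -> 0 <= z -> 0 <= y ->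
  3 * (z + y) <= 2 * w -> (z + y) * w - (z + y) ^+ 2 - eps * w ^+ 2 <= E * w ->
  18 * E <= 10 * z + 3 * y + 7 * u -> u < 3 * eps * w -> y <= 2 / 5 * w.
Proof.
move=> w_gt0 z_ge0 y_ge0 x_le cut E_le u_lt.
have x_sq : (z + y - 2 / 3 * w) * (18 * (z + y) + 4 * w) <= 0.
  by apply: mulr_le0_ge0; lra.
have uw_le : u * w <= 3 * eps * w * w by rewrite ler_pM2r // ltW.
have epsw_le : eps * w * w <= 1 / 2000000%:R * w * w by rewrite !ler_pM2r.
have Ew_le : 18 * E * w <= (10 * z + 3 * y + 7 * u) * w by rewrite ler_pM2r.
by rewrite -(ler_pM2r w_gt0); nra.
Qed.

Lemma closed_remainder_lt (w f E : R) : 0 < w -> 0 <= f -> f <= 2 / 5 * w ->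
  f * w - f ^+ 2 - eps * w ^+ 2 <= E * w -> 9 * E <= 5 * f -> f < 3 * eps * w.
Proof.
move=> w_gt0 f_ge0 f_le cut E_le; rewrite ltNge; apply/negP => f_ge.
have f_mid : 0 <= (f - 3 * eps * w) * (2 / 5 * w - f) by apply: mulr_ge0; lra.
have Ew_le : 9 * E * w <= 5 * f * w by rewrite ler_pM2r.
have epswf_le : eps * (w * f) <= 1 / 2000000%:R * (w * f).
  by apply: ler_wpM2r => //; apply: mulr_ge0; lra.
have epsww_gt0 : 0 < eps * w * w by rewrite !mulr_gt0.
nra.
Qed.
End Spectral.

Theorem mainTheorem9 (R : realFieldType) (eps : R) (T : finType) (e : rel T)
  (e_sym : symmetric e) (e_irr : irreflexive e)
  (eps_pos : (0 < eps)%R) (eps_small : (eps <= 1 / 2000000%:R)%R)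
  (W V S : {set T})
  (hW : spectral_cluster e eps W)
  (hVclosed : closed_in e setT V)
  (hVdom : dominates e eps V W)
  (hSV : S \subset V)
  (hSclosed : closed_in e V S)
  (hSvol : 3 * vol e (W :\: S) <= 2 * vol e W)
  (S1 S2 S3 S4 : {set T})
  (h1 : S1 = grab e V S)
  (h2 : local_improvements e V S1 S2)
  (h3 : S3 = grab e V S2)
  (h4 : local_improvements e V S3 S4) :
  dominates e eps S4 W.
Proof.
have sS1V : S1 \subset V by rewrite h1 grab_subset.
have sS3V : S3 \subset V.
  by rewrite h3 grab_subset // (local_improvements_subsetV h2).
have sS1S4 : S1 \subset S4.
  apply: subset_trans (local_improvements_subset h2) _.
  by apply: subset_trans (local_improvements_subset h4); rewrite h3 subset_grab.
have cut_S := spectral_cluster_cut hW (subsetDl W S).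
have cut_S4 := spectral_cluster_cut hW (subsetDl W S4).
have edges_S := grab_cut_bound W hVclosed hSclosed hSV; rewrite -h1 in edges_S.
have edges_S4 := closed_cut_bound W hVclosed (local_improvements_closed h4)
  (local_improvements_subsetV h4 sS3V).
have vol_S4_S1 : vol e (W :\: S4) <= vol e ((W :\: S) :\: S1).
  apply/vol_subset/subsetP => v /setDP[vW vS4].
  have vS1 : v \notin S1 := contra (subsetP sS1S4 v) vS4.
  have vS : v \notin S by apply: contra vS1; rewrite h1; apply/subsetP/subset_grab.
  by rewrite !inE vW vS vS1.
have w_gt0 : (0 < (vol e W)%:R :> R)%R by rewrite ltr0n; case: hW.
have /dominatesE u_lt := hVdom.
rewrite (vol_setID e (W :\: S) S1) in cut_S hSvol; rewrite natrD in cut_S.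
apply/dominatesE; apply: (closed_remainder_lt eps_pos eps_small w_gt0 (ler0n _ _) _ cut_S4).
- apply: (le_trans (_ : (_ <= (vol e ((W :\: S) :\: S1))%:R)%R)); first by rewrite ler_nat.
  apply: (ungrabbed_le_two_fifths eps_small w_gt0 (ler0n _ _) (ler0n _ _) _ cut_S _ u_lt).
  + by rewrite -natrD -!natrM ler_nat.
  + by rewrite -!natrM -!natrD ler_nat.
- by rewrite -!natrM ler_nat.
Qed.
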